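(* Let $b_{10}>0$, $b_{11}\ge0$, $c_{01}\ge0$, $c_{11}\ge0$, and define $\gamma'=\frac{c_{01}}{b_{10}}$, $\delta'=\frac{b_{10}-b_{11}+c_{11}-c_{01}}{b_{10}}$. Let $\mathcal{F}=\{(P_{11},t): P_{11}\in[0,1],\ P_{11}-1\le t\le P_{11}\}$ and $\mathcal{P}=\{(P_{11},t)\in\mathcal{F}: t>\gamma'+\delta'P_{11}\}$. If $c_{11}\ge b_{11}-b_{10}$ (in particular, whenever $b_{11}\le b_{10}$), then $\mathcal{P}$ contains no pair $(P_{11},t)$ with $t<0$.
   Context: Double binary causal classification: $P_{11}$ is the probability of the positive outcome under the positive treatment, $t=P_{11}-P_{10}$ the estimated individual treatment effect, $b_{ij}$ the benefit of outcome $i$ under treatment $j$ and $c_{ij}$ the cost of outcome $i$ under treatment $j$, normalized so that $c_{00}=c_{10}=0$, $b_{00}=b_{01}=0$. The cost-sensitive causal decision boundary is $t=\gamma'+\delta'P_{11}$ and $\mathcal{P}$ is the positive treatment set. *)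

From Stdlib Require Import Reals.
Open Scope R_scope.

Definition gamma' (b10 c01 : R) : R := c01 / b10.

Definition delta' (b10 b11 c01 c11 : R) : R := (b10 - b11 + c11 - c01) / b10.

Definition in_F (P11 t : R) : Prop :=
  0 <= P11 <= 1 /\ P11 - 1 <= t <= P11.

Definition in_P (b10 b11 c01 c11 P11 t : R) : Prop :=
  in_F P11 t /\ t > gamma' b10 c01 + delta' b10 b11 c01 c11 * P11.

(* The decision boundary is a convex combination of its endpoint values:
   b10 (gamma' + delta' P11) = c01 (1 - P11) + (b10 - b11 + c11) P11.
   Both endpoint values are nonnegative once c11 >= b11 - b10, so the boundary
   is nonnegative on [0, 1] and every t strictly above it is positive. *)

From Stdlib Require Import Reals Lra Psatz.
Open Scope R_scope.

Lemma boundary_scaled (b10 b11 c01 c11 P11 : R) :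
  b10 <> 0 ->
  b10 * (gamma' b10 c01 + delta' b10 b11 c01 c11 * P11)
  = c01 * (1 - P11) + (b10 - b11 + c11) * P11.
Proof. intros Hb10; unfold gamma', delta'; field; exact Hb10. Qed.

Lemma boundary_nonneg (b10 b11 c01 c11 P11 : R) :
  b10 > 0 -> c01 >= 0 -> c11 >= b11 - b10 -> 0 <= P11 <= 1 ->
  0 <= gamma' b10 c01 + delta' b10 b11 c01 c11 * P11.
Proof.
  intros Hb10 Hc01 Hc11 HP11.
  assert (Hscaled : 0 <= b10 * (gamma' b10 c01 + delta' b10 b11 c01 c11 * P11)).
  { rewrite boundary_scaled by lra. nra. }
  nra.
Qed.

Theorem corollary2 (b10 b11 c01 c11 : R) :
  b10 > 0 -> b11 >= 0 -> c01 >= 0 -> c11 >= 0 ->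
  c11 >= b11 - b10 ->
  forall P11 t : R, in_P b10 b11 c01 c11 P11 t -> ~ (t < 0).
Proof.
  intros Hb10 _ Hc01 _ Hc11 P11 t [[HP11 _] Habove].
  pose proof (boundary_nonneg b10 b11 c01 c11 P11 Hb10 Hc01 Hc11 HP11).
  lra.
Qed.
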